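(* Let $\lambda=(\lambda_1,\ldots,\lambda_\ell)$ be a partition with $\ell$ positive parts, and let $n\geq\ell$. If there exists $p\in\{1,\ldots,\ell-2\}$ such that $\lambda_p\geq\lambda_{p+1}\geq\lambda_{p+2}+2$, then the poset $\mathcal B_\lambda^n$ is not a lattice.
   Context: For $N\geq 1$ and a partition $\nu$ with at most $N$ positive parts, $\mathcal B_\nu^N$ is the set of semistandard Young tableaux of shape $\nu$ (rows weakly increasing, columns strictly increasing) with entries in $\{1,\ldots,N+1\}$, partially ordered by the reflexive transitive closure of $T<F_i(T)$ for $i\in\{1,\ldots,N\}$ with $F_i(T)\neq 0$. Here $F_i$ is the type A crystal lowering operator: in the reading word of $T$ (rows read from bottom to top, each row left to right) keep only letters $i$ and $i+1$, replace each $i$ by '')'' and each $i+1$ by ''('', and match parentheses in the usual way; if there is no unmatched '')'', $F_i(T)=0$; otherwise $F_i(T)$ is obtained by changing the entry $i$ corresponding to the rightmost unmatched '')'' into $i+1$. *)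

From Stdlib Require Import Relations.Relation_Definitions Relations.Relation_Operators.
From mathcomp Require Import all_boot.
Set Implicit Arguments. Unset Strict Implicit. Unset Printing Implicit Defensive.

Definition is_partition (nu : seq nat) : bool :=
  sorted geq nu && all (fun a => 0 < a) nu.

(* A tableau is given by its rows, listed top to bottom (row 0 = top row). *)
Definition tableau := seq (seq nat).

Definition is_ssyt (N : nat) (nu : seq nat) (T : tableau) : bool :=
  [&& map size T == nu,
      all (sorted leq) T,
      all (all (fun a => (1 <= a <= N.+1))) T &
      [forall r : 'I_(size T), forall c : 'I_(size (nth [::] T r.+1)),
          nth 0 (nth [::] T r) c < nth 0 (nth [::] T r.+1) c]].

Definition reading_word (T : tableau) : seq nat := flatten (rev T).

(* Scan the word, letters i = ")" and i+1 = "("; k = position, c = number of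
   currently open (unmatched) "(", acc = position of the rightmost unmatched ")"
   seen so far. *)
Fixpoint rightmost_unmatched (i : nat) (w : seq nat) (k c : nat)
    (acc : option nat) : option nat :=
  match w with
  | [::] => acc
  | a :: w' =>
      if a == i.+1 then rightmost_unmatched i w' k.+1 c.+1 acc
      else if a == i then
        (if c == 0 then rightmost_unmatched i w' k.+1 0 (Some k)
         else rightmost_unmatched i w' k.+1 c.-1 acc)
      else rightmost_unmatched i w' k.+1 c acc
  end.

(* Crystal lowering operator F_i; None stands for F_i(T) = 0. *)
Definition F_op (i : nat) (T : tableau) : option tableau :=
  let w := reading_word T in
  match rightmost_unmatched i w 0 0 None with
  | None => None
  | Some k => Some (rev (reshape (map size (rev T)) (set_nth 0 w k i.+1)))
  end.

Definition crys_step (N : nat) (T T' : tableau) : Prop :=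
  exists i, 1 <= i <= N /\ F_op i T = Some T'.

Definition crys_le (N : nat) : tableau -> tableau -> Prop := clos_refl_trans tableau (crys_step N).

Definition is_lattice (T : Type) (S : T -> Prop) (le : T -> T -> Prop) : Prop :=
  forall x y, S x -> S y ->
    (exists z, [/\ S z, le x z, le y z &
                  forall w, S w -> le x w -> le y w -> le z w]) /\
    (exists z, [/\ S z, le z x, le z y &
                  forall w, S w -> le w x -> le w y -> le w z]).

Definition B_poset_is_lattice (N : nat) (nu : seq nat) : Prop :=
  is_lattice (fun T => is_ssyt N nu T) (crys_le N).

From Stdlib Require Import Relations.Relation_Operators Relations.Operators_Properties.
From mathcomp Require Import all_boot zify.
Set Implicit Arguments. Unset Strict Implicit. Unset Printing Implicit Defensive.

(* Every F_i replaces one letter i of the reading word by i+1, so the sum of the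
   entries grades the poset, and for each v the number of entries larger than v
   is monotone and is raised only by F_v.  Fill every row r other than p, p+1,
   p+2 constantly with r+1 (above) or r+2 (below), and these three rows with
     (p+1)^a y z  /  (p+2)^c e (p+4)^d  /  (p+3)^c,
   where c <= a and d > 0 is what the hypothesis on lambda provides.  With
   q = p+1, the choices (y,z,e) = (p+1,p+2,p+3) and (p+1,p+3,p+2) give tableaux
   x and y of equal rank with F_(q+1) x = 0, and z1 = F_(q+1) F_(q+2) x and
   z2 = F_(q+1) F_q x are common upper bounds two ranks higher.  A join z of x
   and y would have to cover x through some F_i, and comparing the counts of
   entries larger than i in z, z1 and z2 forces i = q+1, which is impossible. *)

Notation rum := rightmost_unmatched.

Definition word_rank (T : tableau) : nat := sumn (reading_word T).

Definition count_gt (v : nat) (T : tableau) : nat :=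
  count (fun b => v < b) (reading_word T).

Definition F_op2 (i j : nat) (T : tableau) : option tableau :=
  obind (F_op j) (F_op i T).

Lemma rum_Some i w k0 c acc k : rum i w k0 c acc = Some k ->
  acc = Some k \/ k0 <= k < k0 + size w /\ nth 0 w (k - k0) = i.
Proof.
elim: w k0 c acc => [|b w IHw] k0 c acc /=; first by left.
have IHb c' acc' : rum i w k0.+1 c' acc' = Some k ->
    acc' = Some k \/ k0 <= k < k0 + (size w).+1 /\ nth 0 (b :: w) (k - k0) = i.
  case/IHw=> [->|[/andP[k_lo k_hi] w_k]]; [by left | right; split; first lia].
  by have -> : k - k0 = (k - k0.+1).+1 by lia.
case: eqP => [_|_]; first exact: IHb.
case: eqP => [b_i|_]; last exact: IHb.
case: eqP => _; last exact: IHb.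
case/IHb=> [[<-]|]; last by right.
by right; rewrite subnn b_i; split; first lia.
Qed.

Lemma F_op_word i T T' : F_op i T = Some T' ->
  exists u v, reading_word T = u ++ i :: v /\ reading_word T' = u ++ i.+1 :: v.
Proof.
rewrite /F_op; case E: rum => [k|//] [<-].
have [//|[/andP[_ k_w] w_k]] := rum_Some E; rewrite add0n in k_w; rewrite subn0 in w_k.
set w := reading_word T in k_w w_k *.
exists (take k w), (drop k.+1 w); split.
  by rewrite -{1}(cat_take_drop k w) (drop_nth 0 k_w) w_k.
rewrite /reading_word revK reshapeKr; first by rewrite set_nthE k_w.
move: k_w; rewrite size_set_nth /w /reading_word size_flatten /shape map_rev; lia.
Qed.

Lemma F_op_rank i T T' : F_op i T = Some T' -> word_rank T' = (word_rank T).+1.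
Proof. by rewrite /word_rank => /F_op_word[u [v [-> ->]]]; rewrite !sumn_cat /=; lia. Qed.

Lemma F_op_count_gt i T T' v : F_op i T = Some T' ->
  count_gt v T' = count_gt v T + (v == i).
Proof.
rewrite /count_gt => /F_op_word[u [w [-> ->]]]; rewrite !count_cat /=.
by case: (ltngtP v i) => [v_i|i_v|->]; rewrite ?eqxx; lia.
Qed.

Lemma F_op2_rank i j T T' : F_op2 i j T = Some T' -> word_rank T' = (word_rank T).+2.
Proof.
by rewrite /F_op2; case E: F_op => [U|//] /= /F_op_rank ->; rewrite (F_op_rank E).
Qed.

Lemma F_op2_count_gt i j T T' v : F_op2 i j T = Some T' ->
  count_gt v T' = count_gt v T + (v == i) + (v == j).
Proof.
rewrite /F_op2; case E: F_op => [U|//] /= /F_op_count_gt ->.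
by rewrite (F_op_count_gt _ E).
Qed.

Section CrystalOrder.

Variable N : nat.

Lemma crys_le_count_gt T T' v : crys_le N T T' -> count_gt v T <= count_gt v T'.
Proof.
elim=> {T T'} [T T' [i [_ /F_op_count_gt ->]] | // | T1 T2 T3 _ le12 _ le23].
  exact: leq_addr.
exact: leq_trans le12 le23.
Qed.

Lemma crys_le_rank T T' : crys_le N T T' -> T = T' \/ word_rank T < word_rank T'.
Proof.
elim=> {T T'} [T T' [i [_ /F_op_rank ->]] | T | T1 T2 T3 _ le12 _ le23].
- by right.
- by left.
case: le12 => [->//|lt12]; right; case: le23 => [<-//|]; exact: ltn_trans.
Qed.

Lemma crys_le_cover T T' : crys_le N T T' ->
  word_rank T' = (word_rank T).+1 -> crys_step N T T'.
Proof.
move=> TT'; case: (clos_rt_rt1n _ _ _ _ TT') => [|U T'' [i [i_N TU]]]; first lia.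
move/(clos_rt1n_rt _ _ _ _)=> UT''.
case: (crys_le_rank UT'') => [<- _|]; first by exists i.
by rewrite (F_op_rank TU); lia.
Qed.

Lemma F_op2_crys_le i j T T' : F_op2 i j T = Some T' ->
  0 < i <= N -> 0 < j <= N -> crys_le N T T'.
Proof.
rewrite /F_op2; case E: F_op => [U|//] /= FU i_N j_N.
by apply: (@rt_trans _ _ _ U); apply: rt_step; [exists i | exists j].
Qed.

Lemma two_squares_not_lattice (S : tableau -> Prop) x y z1 z2 q :
  S x -> S y -> S z1 -> S z2 -> 0 < q -> q.+2 <= N ->
  F_op2 q q.+1 x = Some z2 -> F_op2 q.+2 q.+1 x = Some z1 ->
  F_op2 q.+1 q y = Some z2 -> F_op2 q.+1 q.+2 y = Some z1 ->
  F_op q.+1 x = None ->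
  ~ is_lattice S (crys_le N).
Proof.
move=> Sx Sy Sz1 Sz2 q_gt0 q_N xz2 xz1 yz2 yz1 xN /(_ x y Sx Sy).
case=> [[z [Sz xz yz z_min]] _].
have x_z1 : crys_le N x z1 by apply: (F_op2_crys_le xz1); lia.
have x_z2 : crys_le N x z2 by apply: (F_op2_crys_le xz2); lia.
have y_z1 : crys_le N y z1 by apply: (F_op2_crys_le yz1); lia.
have y_z2 : crys_le N y z2 by apply: (F_op2_crys_le yz2); lia.
have z_z1 := z_min z1 Sz1 x_z1 y_z1.
have z_z2 := z_min z2 Sz2 x_z2 y_z2.
have x_neq_y : x <> y by move=> x_y; move: yz1; rewrite /F_op2 -x_y xN.
have z1_neq_z2 : z1 <> z2.
  by move=> z12; have := F_op2_count_gt q xz1; rewrite z12 (F_op2_count_gt q xz2); lia.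
have rank_z : word_rank z = (word_rank x).+1.
  have := F_op2_rank xz1; have := F_op2_rank yz1; have := F_op2_rank xz2.
  case: (crys_le_rank xz) => [x_z|]; first subst z.
    by case: (crys_le_rank yz) => [/esym/x_neq_y|]; last lia.
  case: (crys_le_rank z_z1) => [z_z1'|]; last lia.
  by subst z; case: (crys_le_rank z_z2) => [/z1_neq_z2|]; last lia.
have [i [_ x_to_z]] := crys_le_cover xz rank_z.
have := crys_le_count_gt i z_z1; have := crys_le_count_gt i z_z2.
rewrite (F_op2_count_gt i xz1) (F_op2_count_gt i xz2) (F_op_count_gt i x_to_z) eqxx.
case: (eqVneq i q.+1) => [i_q|]; first by rewrite i_q xN in x_to_z.
lia.
Qed.
End CrystalOrder.

Definition avoids (i : nat) (w : seq nat) : bool :=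
  all (fun b => (b != i) && (b != i.+1)) w.

Lemma rum_avoids i w k c acc : avoids i w -> rum i w k c acc = acc.
Proof.
elim: w k => [|b w IHw] k //= /andP[/andP[/negbTE-> /negbTE->] w_i].
exact: IHw.
Qed.

Lemma rum_cat_avoids i u v k c acc : avoids i u ->
  rum i (u ++ v) k c acc = rum i v (k + size u) c acc.
Proof.
elim: u k => [|b u IHu] k /=; first by rewrite addn0.
by case/andP=> /andP[/negbTE-> /negbTE->] u_i; rewrite IHu // addSnnS.
Qed.

Lemma rum_cat_avoidsr i u v k c acc : avoids i v ->
  rum i (u ++ v) k c acc = rum i u k c acc.
Proof.
move=> v_i; elim: u k c acc => [|b u IHu] k c acc /=; first exact: rum_avoids.
by rewrite !IHu.
Qed.

Lemma rum_shift i w K k c acc :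
  rum i w (K + k) c (omap (addn K) acc) = omap (addn K) (rum i w k c acc).
Proof.
elim: w k c acc => [|b w IHw] k c acc //=; rewrite -addnS.
by case: ifP => _; [|case: ifP => _; [case: ifP => _|]]; rewrite -IHw.
Qed.

Lemma rum_frame i hi w lo : avoids i hi -> avoids i lo ->
  rum i (hi ++ w ++ lo) 0 0 None = omap (addn (size hi)) (rum i w 0 0 None).
Proof.
move=> hi_i lo_i; rewrite rum_cat_avoids // rum_cat_avoidsr // add0n.
by have := rum_shift i w (size hi) 0 0 None; rewrite addn0.
Qed.

Lemma rum_nseq_open i m v k c acc :
  rum i (nseq m i.+1 ++ v) k c acc = rum i v (k + m) (c + m) acc.
Proof.
elim: m k c => [|m IHm] k c /=; first by rewrite !addn0.
by rewrite eqxx IHm !addSnnS.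
Qed.

Lemma rum_nseq_close i m v k c acc :
  rum i (nseq m i ++ v) k c acc =
  rum i v (k + m) (c - m) (if c < m then Some (k + m).-1 else acc).
Proof.
elim: m k c acc => [|m IHm] k c acc /=; first by rewrite addn0 subn0.
rewrite eqxx ltn_eqF //; case: c => [|c] /=; rewrite IHm !addSnnS.
  by rewrite !sub0n; case: m {IHm} => [|m] /=; rewrite ?addn1.
by rewrite subSS ltnS.
Qed.

Lemma rum_nseq_other i b m v k c acc : b != i -> b != i.+1 ->
  rum i (nseq m b ++ v) k c acc = rum i v (k + m) c acc.
Proof.
move=> /negbTE b_i /negbTE b_Si.
by elim: m k => [|m IHm] k /=; rewrite ?addn0 // b_i b_Si IHm addSnnS.
Qed.

Lemma rum_cons_open i v k c acc : rum i (i.+1 :: v) k c acc = rum i v k.+1 c.+1 acc.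
Proof. by rewrite /= eqxx. Qed.

Lemma rum_cons_close i v k c acc :
  rum i (i :: v) k c acc = rum i v k.+1 c.-1 (if c == 0 then Some k else acc).
Proof. by rewrite /= eqxx ltn_eqF //; case: c. Qed.

Lemma rum_cons_other i b v k c acc : b != i -> b != i.+1 ->
  rum i (b :: v) k c acc = rum i v k.+1 c acc.
Proof. by move=> /negbTE /= -> /negbTE ->. Qed.

Lemma set_nth_splice (T : Type) (x0 : T) u v x y :
  set_nth x0 (u ++ x :: v) (size u) y = u ++ y :: v.
Proof. by elim: u => //= b u ->. Qed.

Lemma F_op_splice i T T' u v :
  reading_word T = u ++ i :: v -> reading_word T' = u ++ i.+1 :: v ->
  map size T' = map size T -> rum i (reading_word T) 0 0 None = Some (size u) ->
  F_op i T = Some T'.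
Proof.
move=> wT wT' shape_T' rum_T; rewrite /F_op rum_T wT set_nth_splice -wT'.
by rewrite map_rev -shape_T' -map_rev flattenK revK.
Qed.

Lemma F_op_None i T : rum i (reading_word T) 0 0 None = None -> F_op i T = None.
Proof. by rewrite /F_op => ->. Qed.

Definition tab_of (nu : seq nat) (f : nat -> nat -> nat) : tableau :=
  [seq mkseq (f r) (nth 0 nu r) | r <- iota 0 (size nu)].

Lemma size_tab_of nu f : size (tab_of nu f) = size nu.
Proof. by rewrite size_map size_iota. Qed.

Lemma nth_tab_of nu f r : r < size nu ->
  nth [::] (tab_of nu f) r = mkseq (f r) (nth 0 nu r).
Proof. by move=> r_nu; rewrite (nth_map 0) ?size_iota // nth_iota. Qed.

Lemma shape_tab_of nu f : map size (tab_of nu f) = nu.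
Proof.
rewrite -map_comp -[RHS](mkseq_nth 0); apply: eq_map => r /=.
exact: size_mkseq.
Qed.

Lemma tab_of_ssyt N nu f : sorted geq nu ->
  (forall r j, r < size nu -> j.+1 < nth 0 nu r -> f r j <= f r j.+1) ->
  (forall r j, r < size nu -> j < nth 0 nu r -> 0 < f r j <= N.+1) ->
  (forall r j, r.+1 < size nu -> j < nth 0 nu r.+1 -> f r j < f r.+1 j) ->
  is_ssyt N nu (tab_of nu f).
Proof.
move=> /(sortedP 0) nu_geq f_row f_bound f_col; apply/and4P; split.
- by rewrite shape_tab_of.
- apply/allP=> ? /mapP[r]; rewrite mem_iota => r_nu ->.
  apply/(sortedP 0)=> j; rewrite size_mkseq => j_r.
  by rewrite !nth_mkseq ?f_row //; lia.
- apply/allP=> ? /mapP[r]; rewrite mem_iota => r_nu ->.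
  by apply/allP=> ? /mapP[j]; rewrite mem_iota => j_r ->; apply: f_bound; lia.
apply/forallP=> -[r /=]; rewrite size_tab_of => r_nu; apply/forallP=> -[j /=].
case: (ltnP r.+1 (size nu)) => [r1_nu|r1_nu]; last by rewrite nth_default ?size_tab_of.
have := nu_geq r r1_nu; rewrite !nth_tab_of // size_mkseq => nu_r j_r.
by rewrite !nth_mkseq ?f_col //; lia.
Qed.

Lemma map_iota_const (T : eqType) (f : nat -> T) x m n :
  (forall j, m <= j < m + n -> f j = x) -> map f (iota m n) = nseq n x.
Proof.
move=> f_x; rewrite -{2}(size_iota m n) -(size_map f); apply/all_pred1P/allP.
by move=> ? /mapP[j]; rewrite mem_iota => /f_x /= -> ->.
Qed.

Definition piece (m x y z j : nat) : nat := if j < m then x else if j == m then y else z.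

Lemma mkseq_piece m k x y z :
  mkseq (piece m x y z) (m + k).+1 = nseq m x ++ y :: nseq k z.
Proof.
rewrite /mkseq -addnS iotaD map_cat add0n /= {2}/piece ltnn eqxx.
rewrite (map_iota_const (x := x)) ?(map_iota_const (x := z)) // => j /andP[j_lo j_hi].
  by rewrite /piece ifF ?ifF //; lia.
by rewrite /piece j_hi.
Qed.

Section Window.

Variables (n : nat) (l : seq nat) (p a c d : nat).
Hypotheses (p_l : p.+2 < size l) (l_p : nth 0 l p = a.+2)
  (l_p1 : nth 0 l p.+1 = c + d.+1) (l_p2 : nth 0 l p.+2 = c).

Definition window_entry (y z e r : nat) : nat -> nat :=
  if r < p then fun=> r.+1
  else if r == p then piece a p.+1 y z
  else if r == p.+1 then piece c p.+2 e p.+4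
  else if r == p.+2 then fun=> p.+3
  else fun=> r.+2.

Definition window_tab (y z e : nat) : tableau := tab_of l (window_entry y z e).

Definition window_word (y z e : nat) : seq nat :=
  nseq c p.+3 ++ (nseq c p.+2 ++ e :: nseq d p.+4) ++ (nseq a p.+1 ++ [:: y; z]).

Lemma window_tabE y z e : window_tab y z e =
  [seq nseq (nth 0 l r) r.+1 | r <- iota 0 p] ++
  [:: nseq a p.+1 ++ [:: y; z]; nseq c p.+2 ++ e :: nseq d p.+4; nseq c p.+3] ++
  [seq nseq (nth 0 l r) r.+2 | r <- iota p.+3 (size l - p.+3)].
Proof.
rewrite /window_tab /tab_of -{1}(subnKC p_l) iotaD add0n.
have -> : iota 0 p.+3 = iota 0 p ++ [:: p; p.+1; p.+2] by rewrite -addn3 iotaD.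
rewrite !map_cat -catA; congr (_ ++ _ ++ _).
- apply/eq_in_map=> r; rewrite mem_iota => r_p; apply: map_iota_const => j _.
  by rewrite /window_entry ifT //; lia.
- rewrite /= l_p l_p1 l_p2 /window_entry ltnn eqxx; do ![case: ifP => ?; try lia].
  have -> : a.+2 = (a + 1).+1 by rewrite addn1.
  by rewrite (addnS c d) !mkseq_piece /mkseq (map_iota_const (x := p.+3)).
- apply/(eq_in_map (T := seq nat))=> r; rewrite mem_iota => /andP[r_lo _].
  by apply: map_iota_const => j _; rewrite /window_entry; do ![case: ifP => ?; try lia].
Qed.

Lemma reading_word_window i : p < i < p.+4 -> exists hi lo,
  [/\ avoids i hi, avoids i lo &
      forall y z e, reading_word (window_tab y z e) = hi ++ window_word y z e ++ lo].
Proof.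
move=> i_p; eexists _, _; split=> [|| y z e]; last first.
  by rewrite /reading_word window_tabE !rev_cat !flatten_cat /= cats0 -!catA.
all: apply/allP=> b /flattenP[row]; rewrite mem_rev => /mapP[r].
all: by rewrite mem_iota => r_p -> /nseqP[-> _]; lia.
Qed.

Lemma F_op_window i y z e y' z' e' u v : p < i < p.+4 ->
  window_word y z e = u ++ i :: v -> window_word y' z' e' = u ++ i.+1 :: v ->
  rum i (window_word y z e) 0 0 None = Some (size u) ->
  F_op i (window_tab y z e) = Some (window_tab y' z' e').
Proof.
move=> i_p w_yze w_yze' rum_w.
have [hi [lo [hi_i lo_i w_tab]]] := reading_word_window i_p.
apply: (F_op_splice (u := hi ++ u) (v := v ++ lo)).
- by rewrite w_tab w_yze -!catA.
- by rewrite w_tab w_yze' -!catA.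
- by rewrite !shape_tab_of.
by rewrite w_tab rum_frame // rum_w size_cat.
Qed.

Lemma F_op_window_None i y z e : p < i < p.+4 ->
  rum i (window_word y z e) 0 0 None = None -> F_op i (window_tab y z e) = None.
Proof.
move=> i_p rum_w; apply: F_op_None.
have [hi [lo [hi_i lo_i ->]]] := reading_word_window i_p.
by rewrite rum_frame // rum_w.
Qed.

Lemma F_op_window_y i z e : p < i < p.+4 ->
  rum i (window_word i z e) 0 0 None = Some (c + c + d.+1 + a) ->
  F_op i (window_tab i z e) = Some (window_tab i.+1 z e).
Proof.
move=> i_p rum_w.
apply: (F_op_window (u := nseq c p.+3 ++ (nseq c p.+2 ++ e :: nseq d p.+4) ++ nseq a p.+1)
  (v := [:: z])) => //; try by rewrite /window_word -?catA.
by rewrite rum_w !size_cat /= !size_nseq; congr Some; lia.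
Qed.

Lemma F_op_window_z i y e : p < i < p.+4 ->
  rum i (window_word y i e) 0 0 None = Some (c + c + d.+1 + a).+1 ->
  F_op i (window_tab y i e) = Some (window_tab y i.+1 e).
Proof.
move=> i_p rum_w.
apply: (F_op_window
  (u := nseq c p.+3 ++ (nseq c p.+2 ++ e :: nseq d p.+4) ++ nseq a p.+1 ++ [:: y])
  (v := [::])) => //; try by rewrite /window_word -?catA.
by rewrite rum_w !size_cat /= !size_nseq; congr Some; lia.
Qed.

Lemma F_op_window_e i y z : p < i < p.+4 ->
  rum i (window_word y z i) 0 0 None = Some (c + c) ->
  F_op i (window_tab y z i) = Some (window_tab y z i.+1).
Proof.
move=> i_p rum_w.
apply: (F_op_window (u := nseq c p.+3 ++ nseq c p.+2)
  (v := nseq d p.+4 ++ nseq a p.+1 ++ [:: y; z])) => //; try by rewrite /window_word -?catA.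
by rewrite rum_w size_cat !size_nseq.
Qed.

Ltac rum_step := first
  [ rewrite rum_nseq_open | rewrite rum_nseq_close
  | rewrite rum_cons_open | rewrite rum_cons_close
  | rewrite rum_nseq_other; [|lia|lia] | rewrite rum_cons_other; [|lia|lia] ].

Ltac rum_eval := rewrite /window_word -?catA ?cat_cons -?catA; repeat rum_step; rewrite /=;
  repeat case: ifP => ?; first [done | congr Some; lia | lia].

Hypothesis c_a : c <= a.

Lemma window_tab_ssyt y z e : sorted geq l -> size l <= n ->
  p < y <= z -> z <= p.+3 -> y < e -> p.+2 <= e <= p.+4 ->
  is_ssyt n l (window_tab y z e).
Proof.
move=> l_sorted l_n y_z z_p y_e e_p.
apply: tab_of_ssyt => // [r j _ _ | r j r_l _ | r j _].
1,2: by rewrite /window_entry /piece; do ![case: ifP => ?]; lia.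
have [->|r_p] := eqVneq r p; [rewrite l_p1 | have [->|r_p1] := eqVneq r p.+1; [rewrite l_p2|]].
all: by move=> j_lt; rewrite /window_entry /piece; do ![case: ifP => ?]; lia.
Qed.

Hypothesis d_gt0 : 0 < d.

Lemma window_moves :
  [/\ F_op2 p.+1 p.+2 (window_tab p.+1 p.+2 p.+3) = Some (window_tab p.+2 p.+3 p.+3),
      F_op2 p.+3 p.+2 (window_tab p.+1 p.+2 p.+3) = Some (window_tab p.+1 p.+3 p.+4),
      F_op2 p.+2 p.+1 (window_tab p.+1 p.+3 p.+2) = Some (window_tab p.+2 p.+3 p.+3),
      F_op2 p.+2 p.+3 (window_tab p.+1 p.+3 p.+2) = Some (window_tab p.+1 p.+3 p.+4) &
      F_op p.+2 (window_tab p.+1 p.+2 p.+3) = None].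
Proof.
split; rewrite /F_op2.
- rewrite F_op_window_y /= ?F_op_window_z //; try lia; rum_eval.
- rewrite F_op_window_e /= ?F_op_window_z //; try lia; rum_eval.
- rewrite F_op_window_e /= ?F_op_window_y //; try lia; rum_eval.
- rewrite F_op_window_e /= ?F_op_window_e //; try lia; rum_eval.
- rewrite F_op_window_None //; try lia; rum_eval.
Qed.

End Window.

Theorem lemma5p6 (lambda : seq nat) (n : nat) :
  is_partition lambda ->
  size lambda <= n ->
  (exists p, [/\ p.+2 < size lambda,
                 nth 0 lambda p.+1 <= nth 0 lambda p &
                 (nth 0 lambda p.+2).+2 <= nth 0 lambda p.+1]) ->
  ~ B_poset_is_lattice n lambda.
Proof.
move=> /andP[l_sorted _] l_n [p [p_l l_p1 l_p2]].
have l_p : nth 0 lambda p = (nth 0 lambda p - 2).+2 by lia.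
have l_p1' : nth 0 lambda p.+1 =
    nth 0 lambda p.+2 + (nth 0 lambda p.+1 - nth 0 lambda p.+2 - 1).+1 by lia.
have c_a : nth 0 lambda p.+2 <= nth 0 lambda p - 2 by lia.
have d_gt0 : 0 < nth 0 lambda p.+1 - nth 0 lambda p.+2 - 1 by lia.
have [xz2 xz1 yz2 yz1 xN] := window_moves p_l l_p l_p1' (erefl _) c_a d_gt0.
apply: (two_squares_not_lattice _ _ _ _ _ _ xz2 xz1 yz2 yz1 xN); try lia.
all: by apply: (window_tab_ssyt p_l l_p l_p1' _ c_a) => //; lia.
Qed.
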